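(* Consider the homogeneous all-to-all network described in the context with coupling $\varepsilon$, $(N-1)\varepsilon<1$, a neuronal partial reset $R$, and let $2\le a_1\le N$. Consider the conditions, for $a\in\{1,\dots,a_1-1\}$, (A) $U^{-1}\big(R((a_1-1)\varepsilon)\big)-U^{-1}\big(R((a_1-1)\varepsilon-a\varepsilon)\big)\le U^{-1}\big(1-(N-a_1)\varepsilon\big)-U^{-1}\big(1-(N-a_1)\varepsilon-a\varepsilon\big)$, (B) $U^{-1}\big(R((a_1-1)\varepsilon)+(N-a_1)\varepsilon\big)-U^{-1}\big(R((a_1-1)\varepsilon-a\varepsilon)+(N-a_1)\varepsilon\big)\le1-U^{-1}(1-a\varepsilon)$. If $U$ is icpd, then (A) for all $a\in\{1,\dots,a_1-1\}$ is sufficient, and (B) for all $a\in\{1,\dots,a_1-1\}$ is necessary, for an avalanche of size $a_1$ to be invariant under return. If $U$ is dcpd, then (B) for all such $a$ is sufficient and (A) for all such $a$ is necessary.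
   Context: Model: $N$ units, phases $\phi_i$, rise function $U$ (smooth, $U'>0$, $U(0)=0$, $U(1)=1$), partial reset $R$ (monotonically increasing, $R(0)=0$; neuronal if $0\le R(\zeta)\le\zeta$ for $\zeta\ge0$). $H_\varepsilon(\phi)=U^{-1}(U(\phi)+\varepsilon)$, $J_\varepsilon(\phi)=U^{-1}(R(U(\phi)+\varepsilon-1))$, $S_\sigma(\phi)=\phi+\sigma$, $\bigodot_{r=p}^q(S_{\sigma_r}\circ H_{\varepsilon_r}):=S_{\sigma_q}\circ H_{\varepsilon_q}\circ\cdots\circ S_{\sigma_p}\circ H_{\varepsilon_p}$. Homogeneous all-to-all coupling: pulse strength $\varepsilon>0$ from every unit to every other unit, no self-coupling. Dynamics: between events phases increase at unit rate; when units reach phase $1$ an avalanche occurs: potentials $u_i=U(\phi_i)$ of all units are raised by $\varepsilon$ per firing unit other than themselves, any unit whose potential thereby reaches $\ge1$ also fires, iterating until no new unit crosses; a unit that does not fire has new phase $H_{k\varepsilon}(\phi_i)$, a firing unit has new phase $J_{k'\varepsilon}(\phi_i)$, where $k$ (resp. $k'$) is the number of firing units (other than itself). Firing sequence: for a state in which an avalanche of $a_1$ units is triggered by the unit(s) at phase $1$, list the avalanches until the trigger unit fires next as $\mathcal{F}=((a_1,\sigma_1),\dots,(a_m,\sigma_m))$, $a_r$ = size of the $r$-th avalanche, $\sigma_r\ge0$ the time between the $r$-th and next avalanche. $\mathcal{F}$ is admissible if it is realized by some state, and trigger invariant if the triggering unit(s) of the first avalanche are again at phase $1$ at the end. For a unit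 in the first avalanche with phase $\phi$ just before it, its phase at the end is $M_{\mathcal{F}}(\phi)=\big[\bigodot_{r=2}^m(S_{\sigma_r}\circ H_{a_r\varepsilon})\big]\circ S_{\sigma_1}\circ J_{(a_1-1)\varepsilon}(\phi)$. An avalanche of size $a_1$ is invariant under return if $M_{\mathcal{F}}(U^{-1}(1-a\varepsilon))\ge U^{-1}(1-a\varepsilon)$ for all $a\in\{1,\dots,a_1-1\}$ and all admissible trigger-invariant $\mathcal{F}$ with first avalanche size $a_1$. icpd/dcpd: with $\Delta H(\phi,\Delta\phi,\varepsilon)=H_\varepsilon(\phi+\Delta\phi)-H_\varepsilon(\phi)$ on $\mathcal{D}=\{0\le\varepsilon\le1,0\le\phi\le1,0\le\Delta\phi\le U^{-1}(1-\varepsilon)-\phi\}$, $U$ is icpd if $\partial_\phi\Delta H\ge0$ on $\mathcal{D}$ and dcpd if $\partial_\phi\Delta H\le0$ on $\mathcal{D}$. *)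

From Stdlib Require Import Reals Lra Lia List Bool.
Import ListNotations.
Open Scope R_scope.

Definition smooth (U : R -> R) : Prop :=
  exists D : nat -> R -> R, D 0%nat = U /\
    forall (n : nat) (x : R), derivable_pt_lim (D n) x (D (S n) x).

(* U smooth, U' > 0, U(0)=0, U(1)=1; Uinv is the inverse of U
   (a left inverse on all of R, hence the inverse on the range of U) *)
Definition rise_function (U Uinv : R -> R) : Prop :=
  smooth U /\
  (forall x l, derivable_pt_lim U x l -> 0 < l) /\
  U 0 = 0 /\ U 1 = 1 /\
  (forall x, Uinv (U x) = x).

Definition neuronal_reset (Rr : R -> R) : Prop :=
  (forall x y, x <= y -> Rr x <= Rr y) /\ Rr 0 = 0 /\
  (forall z, 0 <= z -> 0 <= Rr z <= z).

Definition Hmap (U Uinv : R -> R) (e phi : R) : R := Uinv (U phi + e).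
Definition Jmap (U Uinv Rr : R -> R) (e phi : R) : R := Uinv (Rr (U phi + e - 1)).

Definition DeltaH (U Uinv : R -> R) (phi dphi e : R) : R :=
  Hmap U Uinv e (phi + dphi) - Hmap U Uinv e phi.

Definition inD (Uinv : R -> R) (e phi dphi : R) : Prop :=
  0 <= e <= 1 /\ 0 <= phi <= 1 /\ 0 <= dphi <= Uinv (1 - e) - phi.

Definition icpd (U Uinv : R -> R) : Prop :=
  forall e phi dphi, inD Uinv e phi dphi ->
    exists l, derivable_pt_lim (fun p => DeltaH U Uinv p dphi e) phi l /\ 0 <= l.

Definition dcpd (U Uinv : R -> R) : Prop :=
  forall e phi dphi, inD Uinv e phi dphi ->
    exists l, derivable_pt_lim (fun p => DeltaH U Uinv p dphi e) phi l /\ l <= 0.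

Definition card (N : nat) (S : nat -> bool) : nat := length (filter S (seq 0 N)).

Definition at_one (phi : nat -> R) : nat -> bool :=
  fun i => if Req_EM_T (phi i) 1 then true else false.

Definition fire_step (U : R -> R) (N : nat) (eps : R) (phi : nat -> R)
  (S : nat -> bool) : nat -> bool :=
  fun i => orb (S i) (if Rle_dec 1 (U (phi i) + INR (card N S) * eps) then true else false).

(* set of units firing in the avalanche triggered at state phi
   (N rounds suffice for the iteration to stabilise) *)
Definition fireset (U : R -> R) (N : nat) (eps : R) (phi : nat -> R) : nat -> bool :=
  Nat.iter N (fire_step U N eps phi) (at_one phi).

Definition post (U Uinv Rr : R -> R) (N : nat) (eps : R) (phi : nat -> R) : nat -> R :=
  let S := fireset U N eps phi in
  let k := card N S in
  fun i => if S i then Jmap U Uinv Rr (INR (k - 1) * eps) (phi i)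
           else Hmap U Uinv (INR k * eps) (phi i).

Definition maxphase (N : nat) (phi : nat -> R) : R :=
  fold_right Rmax (phi 0%nat) (map phi (seq 0 N)).

Definition gap (N : nat) (phi : nat -> R) : R := 1 - maxphase N phi.

Definition evolve (U Uinv Rr : R -> R) (N : nat) (eps : R) (phi : nat -> R) (sigma : R)
  : nat -> R := fun i => post U Uinv Rr N eps phi i + sigma.

Definition valid_state (N : nat) (phi : nat -> R) : Prop :=
  (forall i, (i < N)%nat -> 0 <= phi i <= 1) /\ exists i, (i < N)%nat /\ phi i = 1.

(* avalanches 2..m: no trigger unit (set T) fires; the avalanche after the
   list is the next one, in which a trigger unit fires *)
Fixpoint runs (U Uinv Rr : R -> R) (N : nat) (eps : R) (T : nat -> bool)
  (phi : nat -> R) (F : list (nat * R)) : Prop :=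
  match F with
  | [] => exists i, (i < N)%nat /\ T i = true /\ fireset U N eps phi i = true
  | (a, sigma) :: rest =>
      (forall i, (i < N)%nat -> T i = true -> fireset U N eps phi i = false) /\
      card N (fireset U N eps phi) = a /\
      sigma = gap N (post U Uinv Rr N eps phi) /\
      runs U Uinv Rr N eps T (evolve U Uinv Rr N eps phi sigma) rest
  end.

Definition realizes (U Uinv Rr : R -> R) (N : nat) (eps : R) (phi : nat -> R)
  (F : list (nat * R)) : Prop :=
  valid_state N phi /\
  match F with
  | [] => False
  | (a, sigma) :: rest =>
      card N (fireset U N eps phi) = a /\
      sigma = gap N (post U Uinv Rr N eps phi) /\
      runs U Uinv Rr N eps (at_one phi) (evolve U Uinv Rr N eps phi sigma) rest
  end.

Fixpoint final (U Uinv Rr : R -> R) (N : nat) (eps : R) (phi : nat -> R)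
  (F : list (nat * R)) : nat -> R :=
  match F with
  | [] => phi
  | (_, sigma) :: rest => final U Uinv Rr N eps (evolve U Uinv Rr N eps phi sigma) rest
  end.

Definition admissible (U Uinv Rr : R -> R) (N : nat) (eps : R) (F : list (nat * R)) : Prop :=
  exists phi, realizes U Uinv Rr N eps phi F.

Definition trigger_invariant (U Uinv Rr : R -> R) (N : nat) (eps : R)
  (F : list (nat * R)) : Prop :=
  forall phi, realizes U Uinv Rr N eps phi F ->
    forall i, (i < N)%nat -> phi i = 1 -> final U Uinv Rr N eps phi F i = 1.

Fixpoint Mrest (U Uinv : R -> R) (eps : R) (F : list (nat * R)) (x : R) : R :=
  match F with
  | [] => x
  | (a, sigma) :: rest => Mrest U Uinv eps rest (Hmap U Uinv (INR a * eps) x + sigma)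
  end.

Definition MF (U Uinv Rr : R -> R) (eps : R) (F : list (nat * R)) (x : R) : R :=
  match F with
  | [] => x
  | (a1, sigma1) :: rest => Mrest U Uinv eps rest (Jmap U Uinv Rr (INR (a1 - 1) * eps) x + sigma1)
  end.

Definition invariant_under_return (U Uinv Rr : R -> R) (N : nat) (eps : R) (a1 : nat) : Prop :=
  forall F : list (nat * R),
    admissible U Uinv Rr N eps F -> trigger_invariant U Uinv Rr N eps F ->
    (exists sigma1 rest, F = (a1, sigma1) :: rest) ->
    forall a : nat, (1 <= a <= a1 - 1)%nat ->
      Uinv (1 - INR a * eps) <= MF U Uinv Rr eps F (Uinv (1 - INR a * eps)).

Definition condA (U Uinv Rr : R -> R) (N : nat) (eps : R) (a1 a : nat) : Prop :=
  Uinv (Rr (INR (a1 - 1) * eps)) - Uinv (Rr (INR (a1 - 1) * eps - INR a * eps))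
  <= Uinv (1 - INR (N - a1) * eps) - Uinv (1 - INR (N - a1) * eps - INR a * eps).

Definition condB (U Uinv Rr : R -> R) (N : nat) (eps : R) (a1 a : nat) : Prop :=
  Uinv (Rr (INR (a1 - 1) * eps) + INR (N - a1) * eps)
  - Uinv (Rr (INR (a1 - 1) * eps - INR a * eps) + INR (N - a1) * eps)
  <= 1 - Uinv (1 - INR a * eps).

From Stdlib Require Import Reals Lra Lia List Bool Classical ClassicalEpsilon.
Import ListNotations.
Open Scope R_scope.

(* Let c = (a1-1) eps, K = (N-a1) eps, p0 = U^-1(R c) the phase to which the
   triggering units are reset, and, for a unit at x_a = U^-1(1 - a eps) just
   before the first avalanche, q0_a = U^-1(R(c - a eps)) its reset phase.
   Conditions (A) and (B) compare the gap p0 - q0_a with the gap at the end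
   of the cycle, (A) before and (B) after the total pulse K is received.

   In an admissible trigger-invariant firing sequence, the
   triggering group runs along a "trigger path" from p0 back to 1, during which
   each of the other N - a1 units fires exactly once (trigger_return_path).
   Along any trigger path the return map is bounded below, icpd and dcpd
   saying in which order a gap is best moved forward and hit by pulses
   (return_bound_icpd / return_bound_dcpd); plugging in (A), resp. (B),
   gives M_F(x_a) >= x_a.

   An explicit firing sequence (all units firing together if
   a1 = N, otherwise a second group firing del after the first avalanche)
   shows that invariance forces H_K(p0 + del) - H_K(q0_a + del) <= 1 - x_a
   (a "return probe"); the icpd (resp. dcpd) monotonicity of the phase gap
   under a pulse turns this into (B) (resp. (A)). *)

(* The derivative is only given pointwise and existentially, so it is chosen
   with Hilbert's epsilon in order to apply the mean value theorem. *)
Lemma nondecreasing_of_nonneg_derivative (f : R -> R) (a b : R) :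
  a <= b ->
  (forall c, a <= c <= b -> exists l, derivable_pt_lim f c l /\ 0 <= l) ->
  f a <= f b.
Proof.
  intros [Hab|<-] Hder; [|lra].
  set (f' := fun c => epsilon (inhabits 0) (fun l => derivable_pt_lim f c l /\ 0 <= l)).
  assert (Hf' : forall c, a <= c <= b -> derivable_pt_lim f c (f' c) /\ 0 <= f' c).
  { intros c Hc. exact (epsilon_spec (inhabits 0) _ (Hder c Hc)). }
  destruct (MVT_cor2 f f' a b Hab) as [c [Heq Hc]].
  { intros c Hc. apply Hf'. exact Hc. }
  assert (0 <= f' c * (b - a)) by (apply Rmult_le_pos; [apply Hf'|]; lra).
  lra.
Qed.

Lemma icpd_DeltaH_mono (U Uinv : R -> R) : icpd U Uinv ->
  forall e d x y, 0 <= e <= 1 -> 0 <= d -> 0 <= x <= y -> y <= 1 ->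
  y + d <= Uinv (1 - e) -> DeltaH U Uinv x d e <= DeltaH U Uinv y d e.
Proof.
  intros Hicpd e d x y He Hd Hxy Hy1 Hyd.
  apply (nondecreasing_of_nonneg_derivative (fun p => DeltaH U Uinv p d e)); [lra|].
  intros c Hc. apply Hicpd. repeat split; lra.
Qed.

Lemma dcpd_DeltaH_mono (U Uinv : R -> R) : dcpd U Uinv ->
  forall e d x y, 0 <= e <= 1 -> 0 <= d -> 0 <= x <= y -> y <= 1 ->
  y + d <= Uinv (1 - e) -> DeltaH U Uinv y d e <= DeltaH U Uinv x d e.
Proof.
  intros Hdcpd e d x y He Hd Hxy Hy1 Hyd.
  enough (- DeltaH U Uinv x d e <= - DeltaH U Uinv y d e) by lra.
  apply (nondecreasing_of_nonneg_derivative (fun p => - DeltaH U Uinv p d e)); [lra|].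
  intros c Hc. destruct (Hdcpd e c d) as [l [Hl Hl0]]; [repeat split; lra|].
  exists (- l). split; [apply derivable_pt_lim_opp; exact Hl | lra].
Qed.

Section RiseFunction.
Variables U Uinv : R -> R.
Hypothesis HU : rise_function U Uinv.

Lemma U_derivable : forall x, exists l, derivable_pt_lim U x l /\ 0 < l.
Proof.
  destruct HU as [[D [HD0 HD]] [Hpos _]]. intro x.
  assert (Hx := HD 0%nat x). rewrite HD0 in Hx.
  exists (D 1%nat x). split; [exact Hx | exact (Hpos _ _ Hx)].
Qed.

Lemma U_lt : forall x y, x < y -> U x < U y.
Proof.
  intros x y Hxy.
  destruct (MVT_cor2 U (fun c => epsilon (inhabits 0)
              (fun l => derivable_pt_lim U c l /\ 0 < l)) x y Hxy) as [c [Heq _]].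
  { intros c _. exact (proj1 (epsilon_spec (inhabits 0) _ (U_derivable c))). }
  assert (Hc := proj2 (epsilon_spec (inhabits 0) _ (U_derivable c))).
  assert (0 < epsilon (inhabits 0) (fun l => derivable_pt_lim U c l /\ 0 < l) * (y - x))
    by (apply Rmult_lt_0_compat; lra).
  lra.
Qed.

Lemma U_le : forall x y, x <= y -> U x <= U y.
Proof. intros x y [H|<-]; [left; apply U_lt; exact H | lra]. Qed.

Lemma U_le_inv : forall x y, U x <= U y -> x <= y.
Proof. intros x y H. destruct (Rle_lt_dec x y) as [|Hyx]; [auto|]. apply U_lt in Hyx. lra. Qed.

Lemma U_lt_inv : forall x y, U x < U y -> x < y.
Proof. intros x y H. destruct (Rlt_le_dec x y) as [|Hyx]; [auto|]. apply U_le in Hyx. lra. Qed.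

Lemma U0 : U 0 = 0.
Proof. apply HU. Qed.

Lemma U1 : U 1 = 1.
Proof. apply HU. Qed.

Lemma UinvU : forall x, Uinv (U x) = x.
Proof. apply HU. Qed.

Lemma Uinv1 : Uinv 1 = 1.
Proof. rewrite <- U1 at 1. apply UinvU. Qed.

(* U maps [0,1] onto [0,1] (intermediate value theorem), so Uinv is a
   genuine inverse there. *)
Lemma UUinv : forall v, 0 <= v <= 1 -> U (Uinv v) = v.
Proof.
  intros v Hv.
  assert (HUc : continuity U).
  { intro x. destruct (U_derivable x) as [l [Hl _]].
    apply derivable_continuous_pt. exists l. exact Hl. }
  destruct (IVT_cor (fun t => U t - v) 0 1) as [t [_ Ht]].
  - intro x. apply continuity_minus; [apply HUc | apply continuity_const; intros ? ?; auto].
  - lra.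
  - rewrite U0, U1. nra.
  - assert (U t = v) as <- by lra. rewrite UinvU. reflexivity.
Qed.

Lemma U_nonneg : forall x, 0 <= x -> 0 <= U x.
Proof. intros x Hx. rewrite <- U0. apply U_le. exact Hx. Qed.

Lemma Uinv_le : forall u v, 0 <= u -> u <= v -> v <= 1 -> Uinv u <= Uinv v.
Proof. intros u v H1 H2 H3. apply U_le_inv. rewrite !UUinv; lra. Qed.

Lemma Uinv_lt : forall u v, 0 <= u -> u < v -> v <= 1 -> Uinv u < Uinv v.
Proof. intros u v H1 H2 H3. apply U_lt_inv. rewrite !UUinv; lra. Qed.

Lemma Uinv_range : forall v, 0 <= v <= 1 -> 0 <= Uinv v <= 1.
Proof.
  intros v Hv. assert (Uinv 0 = 0) as <- by (rewrite <- U0 at 1; apply UinvU).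
  rewrite <- Uinv1. split; apply Uinv_le; lra.
Qed.

Lemma Uinv_lt1 : forall v, 0 <= v < 1 -> Uinv v < 1.
Proof. intros v Hv. apply U_lt_inv. rewrite UUinv, U1; lra. Qed.

Lemma U_Hmap : forall e y, 0 <= y -> 0 <= e -> U y + e <= 1 ->
  U (Hmap U Uinv e y) = U y + e.
Proof. intros e y Hy He H. apply UUinv. assert (0 <= U y) by (apply U_nonneg; exact Hy). lra. Qed.

Lemma Hmap_ge0 : forall e y, 0 <= y -> 0 <= e -> U y + e <= 1 -> 0 <= Hmap U Uinv e y.
Proof.
  intros e y Hy He H. apply U_le_inv. rewrite U0, U_Hmap by assumption.
  assert (0 <= U y) by (apply U_nonneg; exact Hy). lra.
Qed.

Lemma Hmap_le : forall e a b, 0 <= a <= b -> 0 <= e -> U b + e <= 1 ->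
  Hmap U Uinv e a <= Hmap U Uinv e b.
Proof.
  intros e a b Hab He H. apply U_le_inv. assert (U a <= U b) by (apply U_le; lra).
  rewrite !U_Hmap; lra.
Qed.

Lemma Hmap_lt : forall e a b, 0 <= a -> a < b -> 0 <= e -> U b + e <= 1 ->
  Hmap U Uinv e a < Hmap U Uinv e b.
Proof.
  intros e a b Ha Hab He H. apply U_lt_inv. assert (U a < U b) by (apply U_lt; lra).
  rewrite !U_Hmap; lra.
Qed.

Lemma Hmap_lt_inv : forall e a b, 0 <= a -> 0 <= b -> 0 <= e -> U a + e <= 1 -> U b + e <= 1 ->
  Hmap U Uinv e a < Hmap U Uinv e b -> a < b.
Proof. intros e a b Ha Hb He HUa HUb H. apply U_lt_inv. apply U_lt in H. rewrite !U_Hmap in H; lra. Qed.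

Lemma Hmap_comp : forall e e' y, 0 <= y -> 0 <= e -> 0 <= e' -> U y + e + e' <= 1 ->
  Hmap U Uinv e' (Hmap U Uinv e y) = Hmap U Uinv (e + e') y.
Proof. intros. unfold Hmap at 1. rewrite U_Hmap by lra. unfold Hmap. f_equal. ring. Qed.

Lemma Hmap0 : forall y, Hmap U Uinv 0 y = y.
Proof. intro y. unfold Hmap. rewrite Rplus_0_r. apply UinvU. Qed.

End RiseFunction.

Fixpoint firings (L : list (nat * R)) : nat :=
  match L with [] => 0%nat | (a, _) :: L' => (a + firings L')%nat end.

(* The return map of one unit of the triggering group.  Along a
   trigger-invariant firing sequence, after its first avalanche, the group is
   at phase p, receives avalanches of sizes a (without firing) separated by
   free evolution of durations s, and finally arrives at phase 1. *)
Section TriggerPath.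
Variables U Uinv : R -> R.
Hypothesis HU : rise_function U Uinv.
Variable eps : R.
Hypothesis Heps : 0 <= eps.

Local Notation H := (Hmap U Uinv).
Local Notation pulse L := (INR (firings L) * eps).

Inductive trigger_path : R -> list (nat * R) -> Prop :=
| trigger_path_end : trigger_path 1 []
| trigger_path_step p a s L : 0 <= s -> 0 <= p -> U p + INR a * eps < 1 ->
    trigger_path (H (INR a * eps) p + s) L -> trigger_path p ((a, s) :: L).

Lemma pulse_ge0 : forall n, 0 <= INR n * eps.
Proof. intro n. apply Rmult_le_pos; [apply pos_INR | exact Heps]. Qed.

Lemma pulse_cons : forall a s L, pulse ((a, s) :: L) = INR a * eps + pulse L.
Proof. intros. simpl. rewrite plus_INR. ring. Qed.

Lemma trigger_path_budget : forall p L, trigger_path p L -> 0 <= p /\ U p + pulse L <= 1.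
Proof.
  intros p L HT. induction HT as [|p a s L Hs Hp Ha HT [Hp' IH]].
  - simpl. rewrite (U1 U Uinv HU). lra.
  - split; [exact Hp|]. rewrite pulse_cons.
    assert (Ha0 : 0 <= INR a * eps) by apply pulse_ge0.
    assert (Hmono : U (H (INR a * eps) p) <= U (H (INR a * eps) p + s)) by (apply (U_le U Uinv HU); lra).
    rewrite (U_Hmap U Uinv HU) in * by lra. lra.
Qed.

Lemma trigger_path_threshold : forall p L, trigger_path p L ->
  0 <= p <= Uinv (1 - pulse L) /\ 0 <= 1 - pulse L <= 1.
Proof.
  intros p L HT. destruct (trigger_path_budget p L HT) as [Hp HUp].
  assert (0 <= U p) by (apply (U_nonneg U Uinv HU); exact Hp).
  assert (0 <= pulse L) by apply pulse_ge0.
  split; [split; [exact Hp|] | lra].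
  apply (U_le_inv U Uinv HU). rewrite (UUinv U Uinv HU); lra.
Qed.

(* Lower bound on the return of a unit that starts q <= p, icpd case: the
   gap p - q is at worst carried unchanged to the last moment, where the
   whole remaining pulse is received at once. *)
Lemma return_bound_icpd : icpd U Uinv -> forall p L, trigger_path p L ->
  forall q, 0 <= q <= p -> H (pulse L) (Uinv (1 - pulse L) - (p - q)) <= Mrest U Uinv eps L q.
Proof.
  intros Hicpd p L HT. induction HT as [|p a s L Hs Hp Ha HT IH]; intros q Hq.
  - simpl. rewrite Rmult_0_l, Rminus_0_r, (Uinv1 U Uinv HU), (Hmap0 U Uinv HU). lra.
  - simpl Mrest. rewrite pulse_cons.
    set (e := INR a * eps) in *. set (S := pulse L) in *.
    assert (He : 0 <= e) by apply pulse_ge0.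
    assert (HS : 0 <= S) by apply pulse_ge0.
    destruct (trigger_path_threshold _ _ (trigger_path_step p a s L Hs Hp Ha HT))
      as [[_ Hpr] Hr01].
    rewrite pulse_cons in Hpr, Hr01. fold e S in Hpr, Hr01.
    destruct (trigger_path_threshold _ _ HT) as [[HHp HHpr] _]. fold S in HHp, HHpr.
    set (r := Uinv (1 - (e + S))) in *.
    assert (HUr : U r = 1 - (e + S)) by (apply (UUinv U Uinv HU); lra).
    assert (Hr1 : r <= 1) by (apply (U_le_inv U Uinv HU); rewrite HUr, (U1 U Uinv HU); lra).
    set (y := r - (p - q)).
    assert (HUy : U y <= U r) by (apply (U_le U Uinv HU); unfold y; lra).
    assert (HUqp : U q <= U p) by (apply (U_le U Uinv HU); lra).
    assert (HUq : 0 <= U q) by (apply (U_nonneg U Uinv HU); lra).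
    assert (HHq : H e q <= H e p) by (apply (Hmap_le U Uinv HU); lra).
    assert (HHq0 : 0 <= H e q) by (apply (Hmap_ge0 U Uinv HU); lra).
    (* icpd applied to the pair (q, p) against the pair (y, r) at pulse e *)
    assert (Hkey : H e p - H e q <= Uinv (1 - S) - H e y).
    { assert (Hrr : H e r = Uinv (1 - S)) by (unfold Hmap; rewrite HUr; f_equal; ring).
      assert (Hic := icpd_DeltaH_mono U Uinv Hicpd e (p - q) q y).
      unfold DeltaH in Hic. replace (q + (p - q)) with p in Hic by ring.
      replace (y + (p - q)) with r in Hic by (unfold y; ring). rewrite Hrr in Hic.
      apply Hic; unfold y, r in *; try lra. apply (Uinv_le U Uinv HU); lra. }
    rewrite <- (Hmap_comp U Uinv HU e S y) by (unfold y in *; lra).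
    eapply Rle_trans; [|apply IH; split; [lra | apply Rplus_le_compat_r; exact HHq]].
    apply (Hmap_le U Uinv HU); [|exact HS|].
    + split; [apply (Hmap_ge0 U Uinv HU); unfold y in *; lra | lra].
    + assert (Hlast : U (Uinv (1 - S) - (H e p + s - (H e q + s))) <= U (Uinv (1 - S)))
        by (apply (U_le U Uinv HU); lra).
      rewrite (UUinv U Uinv HU) in Hlast by lra. lra.
Qed.

(* Lower bound on the return, dcpd case: the gap p - q is at worst the one
   obtained when the whole remaining pulse arrives immediately. *)
Lemma return_bound_dcpd : dcpd U Uinv -> forall p L, trigger_path p L ->
  forall q, 0 <= q <= p -> H (pulse L) q - H (pulse L) p + 1 <= Mrest U Uinv eps L q.
Proof.
  intros Hdcpd p L HT. induction HT as [|p a s L Hs Hp Ha HT IH]; intros q Hq.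
  - simpl. rewrite Rmult_0_l, !(Hmap0 U Uinv HU). lra.
  - simpl Mrest. rewrite pulse_cons.
    set (e := INR a * eps) in *. set (S := pulse L) in *.
    assert (He : 0 <= e) by apply pulse_ge0.
    assert (HS : 0 <= S) by apply pulse_ge0.
    destruct (trigger_path_budget _ _ (trigger_path_step p a s L Hs Hp Ha HT)) as [_ HUpS].
    rewrite pulse_cons in HUpS. fold e S in HUpS.
    destruct (trigger_path_threshold _ _ HT) as [[HHp HHpr] Hr01]. fold S in HHp, HHpr, Hr01.
    assert (HUq : 0 <= U q) by (apply (U_nonneg U Uinv HU); lra).
    assert (HUqp : U q <= U p) by (apply (U_le U Uinv HU); lra).
    assert (HHq : H e q <= H e p) by (apply (Hmap_le U Uinv HU); lra).
    assert (HHq0 : 0 <= H e q) by (apply (Hmap_ge0 U Uinv HU); lra).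
    assert (Hr1 : Uinv (1 - S) <= 1) by (apply (Uinv_range U Uinv HU); lra).
    (* dcpd: the gap H e p - H e q shrinks less if the pulse S comes now
       rather than after the free evolution s *)
    assert (Hd : H S (H e p + s) - H S (H e q + s) <= H S (H e p) - H S (H e q)).
    { assert (Hd := dcpd_DeltaH_mono U Uinv Hdcpd S (H e p - H e q) (H e q) (H e q + s)).
      unfold DeltaH in Hd.
      replace (H e q + s + (H e p - H e q)) with (H e p + s) in Hd by ring.
      replace (H e q + (H e p - H e q)) with (H e p) in Hd by ring.
      apply Hd; lra. }
    rewrite <- (Hmap_comp U Uinv HU e S q), <- (Hmap_comp U Uinv HU e S p) by lra.
    assert (IH' := IH (H e q + s) ltac:(lra)). lra.
Qed.

End TriggerPath.

Section Counting.
Variable N : nat.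

Lemma card_ext : forall S S', (forall i, (i < N)%nat -> S i = S' i) -> card N S = card N S'.
Proof.
  intros S S' HS. unfold card. rewrite (filter_ext_in S S'); [reflexivity|].
  intros i Hi. apply HS. apply in_seq in Hi. lia.
Qed.

Lemma card_le : forall S, (card N S <= N)%nat.
Proof. intro S. unfold card. rewrite <- (length_seq N 0) at 2. apply filter_length_le. Qed.

Lemma card_true : card N (fun _ => true) = N.
Proof. unfold card. rewrite filter_true. apply length_seq. Qed.

Lemma card_pos : forall S i, (i < N)%nat -> S i = true -> (1 <= card N S)%nat.
Proof.
  intros S i Hi HSi. unfold card.
  assert (Hin : In i (filter S (seq 0 N))) by (apply filter_In; rewrite in_seq; split; [lia | exact HSi]).
  destruct (filter S (seq 0 N)); [contradiction | simpl; lia].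
Qed.

Lemma card_split : forall P F, (forall i, (i < N)%nat -> F i = true -> P i = true) ->
  (card N (fun i => P i && negb (F i)) + card N F = card N P)%nat.
Proof.
  intros P F HFP. unfold card.
  assert (Hl : forall l, (forall i, In i l -> F i = true -> P i = true) ->
    (length (filter (fun i => P i && negb (F i)) l) + length (filter F l) = length (filter P l))%nat).
  { induction l as [|x l IH]; intro Hsub; [reflexivity|]. simpl.
    specialize (IH (fun i Hi => Hsub i (or_intror Hi))).
    destruct (F x) eqn:EF; [rewrite (Hsub x (or_introl eq_refl) EF) |]; destruct (P x); simpl; lia. }
  apply Hl. intros i Hi. apply HFP. apply in_seq in Hi. lia.
Qed.

Lemma card_mono : forall S S', (forall i, (i < N)%nat -> S i = true -> S' i = true) ->
  (card N S <= card N S')%nat.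
Proof. intros S S' Hsub. rewrite <- (card_split S' S Hsub). lia. Qed.

Lemma card_strict : forall S S' i, (forall j, (j < N)%nat -> S j = true -> S' j = true) ->
  (i < N)%nat -> S i = false -> S' i = true -> (card N S < card N S')%nat.
Proof.
  intros S S' i Hsub Hi HSi HS'i. rewrite <- (card_split S' S Hsub).
  assert (Hpos := card_pos (fun j => S' j && negb (S j)) i Hi ltac:(cbn; rewrite HSi, HS'i; reflexivity)).
  lia.
Qed.

Lemma card_full : forall S, (N <= card N S)%nat -> forall i, (i < N)%nat -> S i = true.
Proof.
  intros S HN i Hi. destruct (S i) eqn:E; [reflexivity|].
  assert (Hsplit := card_split (fun _ => true) S (fun _ _ _ => eq_refl)).
  rewrite card_true in Hsplit.
  assert (Hpos := card_pos (fun j => true && negb (S j)) i Hi ltac:(cbn; rewrite E; reflexivity)).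
  lia.
Qed.

Lemma card_first : forall a, (a <= N)%nat -> card N (fun i => Nat.ltb i a) = a.
Proof.
  intro a. induction N as [|n IH]; intro Ha; [unfold card; simpl; lia|].
  destruct (Nat.eq_dec a (S n)) as [->|Hne].
  - unfold card. rewrite (filter_ext_in _ (fun _ => true)), filter_true, length_seq; [reflexivity|].
    intros i Hi. apply in_seq in Hi. apply Nat.ltb_lt. lia.
  - unfold card in *. rewrite seq_S, filter_app, length_app, IH by lia. simpl.
    replace (Nat.ltb n a) with false by (symmetry; apply Nat.ltb_ge; lia). simpl. lia.
Qed.

Lemma card_last : forall a, (a <= N)%nat -> card N (fun i => negb (Nat.ltb i a)) = (N - a)%nat.
Proof.
  intros a Ha. assert (Hsplit := card_split (fun _ => true) (fun i => Nat.ltb i a) (fun _ _ _ => eq_refl)).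
  rewrite card_true, card_first in Hsplit by exact Ha. simpl in Hsplit. lia.
Qed.

End Counting.

Lemma maxphase_attained : forall N f, (0 < N)%nat ->
  exists i, (i < N)%nat /\ maxphase N f = f i.
Proof.
  intros N f HN. unfold maxphase.
  assert (Hl : forall l, fold_right Rmax (f 0%nat) (map f l) = f 0%nat \/
            exists i, In i l /\ fold_right Rmax (f 0%nat) (map f l) = f i).
  { induction l as [|x l [IH|[i [Hi IH]]]]; [left; reflexivity | |]; simpl; rewrite IH;
      unfold Rmax; destruct (Rle_dec _ _); eauto with datatypes. }
  destruct (Hl (seq 0 N)) as [E|[i [Hi E]]].
  - exists 0%nat. split; [exact HN | exact E].
  - exists i. apply in_seq in Hi. split; [lia | exact E].
Qed.

Lemma maxphase_ge : forall N f i, (i < N)%nat -> f i <= maxphase N f.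
Proof.
  intros N f i Hi. unfold maxphase.
  assert (Hl : forall l, In i l -> f i <= fold_right Rmax (f 0%nat) (map f l)).
  { induction l as [|x l IH]; intro Hin; [contradiction|]. simpl.
    destruct Hin as [->|Hin]; [apply Rmax_l | eapply Rle_trans; [apply IH, Hin | apply Rmax_r]]. }
  apply Hl. apply in_seq. lia.
Qed.

Lemma maxphase_eq : forall N f M i, (i < N)%nat -> f i = M ->
  (forall j, (j < N)%nat -> f j <= M) -> maxphase N f = M.
Proof.
  intros N f M i Hi Hfi Hle. apply Rle_antisym.
  - destruct (maxphase_attained N f ltac:(lia)) as [j [Hj ->]]. apply Hle, Hj.
  - rewrite <- Hfi. apply maxphase_ge, Hi.
Qed.

(* The avalanche: iterating fire_step from the units at phase 1 stabilises
   after at most N rounds, so fireset is closed under firing; this yields the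
   threshold characterisation of the firing and non-firing units. *)
Section Avalanche.
Variable U : R -> R.
Variable N : nat.
Variable eps : R.
Hypothesis HU1 : U 1 = 1.
Hypothesis Heps : 0 < eps.

Let fire_iter (phi : nat -> R) (n : nat) : nat -> bool :=
  Nat.iter n (fire_step U N eps phi) (at_one phi).

Definition stable (phi : nat -> R) (S : nat -> bool) : Prop :=
  forall i, (i < N)%nat -> fire_step U N eps phi S i = S i.

Lemma fire_step_incl : forall phi S i, S i = true -> fire_step U N eps phi S i = true.
Proof. intros phi S i HS. unfold fire_step. rewrite HS. reflexivity. Qed.

Lemma fire_step_ext : forall phi S S', (forall i, (i < N)%nat -> S i = S' i) ->
  forall i, (i < N)%nat -> fire_step U N eps phi S i = fire_step U N eps phi S' i.
Proof.
  intros phi S S' HS i Hi. unfold fire_step.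
  rewrite (card_ext N S S' HS), HS by exact Hi. reflexivity.
Qed.

Lemma at_one_eq : forall phi i, at_one phi i = true <-> phi i = 1.
Proof. intros phi i. unfold at_one. destruct (Req_EM_T (phi i) 1); split; congruence. Qed.

Lemma fireset_at_one : forall phi i, phi i = 1 -> fireset U N eps phi i = true.
Proof.
  intros phi i Hi. apply at_one_eq in Hi. change (fire_iter phi N i = true).
  generalize N as n. intro n. induction n as [|n IH]; [exact Hi | apply fire_step_incl, IH].
Qed.

Lemma fire_step_grows_or_stable : forall phi S,
  stable phi S \/ (card N S < card N (fire_step U N eps phi S))%nat.
Proof.
  intros phi S. destruct (classic (exists i, (i < N)%nat /\ fire_step U N eps phi S i <> S i))
    as [[i [Hi Hne]]|Hno].
  - right. apply (card_strict N _ _ i); [intros j _; apply fire_step_incl | exact Hi | |].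
    + destruct (S i) eqn:E; [|reflexivity].
      exfalso. apply Hne, fire_step_incl, E.
    + destruct (S i) eqn:E; [exfalso; apply Hne, fire_step_incl, E|].
      destruct (fire_step U N eps phi S i); congruence.
  - left. intros i Hi. apply NNPP. intro Hne. apply Hno. exists i. split; assumption.
Qed.

Lemma fire_iter_large_or_stable : forall phi n,
  (n <= card N (fire_iter phi n))%nat \/ stable phi (fire_iter phi n).
Proof.
  intros phi n. induction n as [|n IH]; [left; lia|].
  assert (Hkeep : stable phi (fire_iter phi n) -> stable phi (fire_iter phi (S n))).
  { intros Hst i Hi. apply (fire_step_ext phi _ _ Hst i Hi). }
  destruct IH as [IH|IH]; [|right; apply Hkeep, IH].
  destruct (fire_step_grows_or_stable phi (fire_iter phi n)) as [Hst|Hgrow].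
  - right. apply Hkeep, Hst.
  - left. simpl in Hgrow |- *. lia.
Qed.

Lemma fireset_stable : forall phi, stable phi (fireset U N eps phi).
Proof.
  intro phi. destruct (fire_iter_large_or_stable phi N) as [Hfull|Hst]; [|exact Hst].
  intros i Hi. assert (Hall := card_full N _ Hfull).
  change (fireset U N eps phi) with (fire_iter phi N). rewrite (Hall i Hi).
  apply fire_step_incl, Hall, Hi.
Qed.

Lemma fired_threshold : forall phi i, (i < N)%nat -> fireset U N eps phi i = true ->
  1 <= U (phi i) + INR (card N (fireset U N eps phi) - 1) * eps.
Proof.
  intro phi. change (fireset U N eps phi) with (fire_iter phi N).
  generalize N at 2 4 as n. intro n. induction n as [|n IH].
  - intros i _ Hi. apply at_one_eq in Hi. rewrite Hi, HU1.
    assert (0 <= INR (card N (fire_iter phi 0) - 1) * eps) by (apply Rmult_le_pos; [apply pos_INR | lra]).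
    lra.
  - intros i Hi Hfire.
    assert (Hsub : forall j, (j < N)%nat -> fire_iter phi n j = true -> fire_iter phi (S n) j = true)
      by (intros j _; apply fire_step_incl).
    assert (Hmono := card_mono N _ _ Hsub).
    destruct (fire_iter phi n i) eqn:E.
    + specialize (IH i Hi E).
      assert (INR (card N (fire_iter phi n) - 1) * eps <= INR (card N (fire_iter phi (S n)) - 1) * eps)
        by (apply Rmult_le_compat_r; [lra | apply le_INR; lia]).
      lra.
    + assert (Hlt := card_strict N _ _ i Hsub Hi E Hfire).
      simpl in Hfire. unfold fire_step in Hfire. rewrite E in Hfire.
      destruct (Rle_dec 1 (U (phi i) + INR (card N (fire_iter phi n)) * eps)) as [Hc|]; [|discriminate].
      assert (INR (card N (fire_iter phi n)) * eps <= INR (card N (fire_iter phi (S n)) - 1) * eps)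
        by (apply Rmult_le_compat_r; [lra | apply le_INR; lia]).
      lra.
Qed.

Lemma unfired_threshold : forall phi i, (i < N)%nat -> fireset U N eps phi i = false ->
  U (phi i) + INR (card N (fireset U N eps phi)) * eps < 1.
Proof.
  intros phi i Hi Hnf. assert (Hst := fireset_stable phi i Hi). rewrite Hnf in Hst.
  unfold fire_step in Hst. rewrite Hnf in Hst.
  destruct (Rle_dec 1 _); [discriminate | lra].
Qed.

Lemma fireset_char : forall phi A, (forall i, (i < N)%nat -> at_one phi i = A i) ->
  stable phi A -> forall i, (i < N)%nat -> fireset U N eps phi i = A i.
Proof.
  intros phi A Hone Hst. change (fireset U N eps phi) with (fire_iter phi N).
  generalize N at 2 as n. intro n. induction n as [|n IH]; [exact Hone|].
  intros i Hi. simpl. rewrite (fire_step_ext phi _ A IH i Hi). apply Hst, Hi.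
Qed.

End Avalanche.

Definition in_range (N : nat) (phi : nat -> R) : Prop :=
  forall i, (i < N)%nat -> 0 <= phi i <= 1.

Definition ahead (psi : nat -> R) (p : R) : nat -> bool :=
  fun i => if Rlt_dec p (psi i) then true else false.

Section Network.
Variables U Uinv Rr : R -> R.
Variable N : nat.
Variable eps : R.
Hypothesis HU : rise_function U Uinv.
Hypothesis HR : neuronal_reset Rr.
Hypothesis Heps : 0 < eps.
Hypothesis HN1 : INR (N - 1) * eps < 1.

Local Notation H := (Hmap U Uinv).
Local Notation J := (Jmap U Uinv Rr).
Local Notation fired phi := (fireset U N eps phi).
Local Notation size phi := (card N (fireset U N eps phi)).

Let Heps0 : 0 <= eps := Rlt_le _ _ Heps.
Let HU1 : U 1 = 1 := U1 U Uinv HU.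

Definition group_at (T : nat -> bool) (psi : nat -> R) (p : R) : Prop :=
  in_range N psi /\ (forall i, (i < N)%nat -> T i = true -> psi i = p) /\
  exists t, (t < N)%nat /\ T t = true.

Lemma reset_bounds : forall z, 0 <= z -> 0 <= Rr z <= z.
Proof. apply HR. Qed.

Lemma reset_mono : forall x y, x <= y -> Rr x <= Rr y.
Proof. apply HR. Qed.

Lemma J_at_one : forall e, J e 1 = Uinv (Rr e).
Proof. intro e. unfold Jmap. rewrite HU1. f_equal. f_equal. ring. Qed.

Lemma avalanche_pulse_bound : forall S, INR (card N S - 1) * eps <= INR (N - 1) * eps.
Proof.
  intro S. apply Rmult_le_compat_r; [exact Heps0|].
  apply le_INR. assert (Hle := card_le N S). lia.
Qed.

Lemma post_fired : forall phi i, fired phi i = true ->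
  post U Uinv Rr N eps phi i = J (INR (size phi - 1) * eps) (phi i).
Proof. intros phi i Hi. unfold post. rewrite Hi. reflexivity. Qed.

Lemma post_unfired : forall phi i, fired phi i = false ->
  post U Uinv Rr N eps phi i = H (INR (size phi) * eps) (phi i).
Proof. intros phi i Hi. unfold post. rewrite Hi. reflexivity. Qed.

Lemma post_range : forall phi, in_range N phi -> forall i, (i < N)%nat ->
  0 <= post U Uinv Rr N eps phi i < 1.
Proof.
  intros phi Hr i Hi. assert (Hk := avalanche_pulse_bound (fired phi)).
  destruct (fired phi i) eqn:E.
  - rewrite post_fired by exact E. unfold Jmap.
    assert (Hth := fired_threshold U N eps HU1 Heps phi i Hi E).
    assert (HUi : U (phi i) <= 1) by (rewrite <- HU1; apply (U_le U Uinv HU), Hr, Hi).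
    assert (HRz := reset_bounds (U (phi i) + INR (size phi - 1) * eps - 1) ltac:(lra)).
    split; [apply (Uinv_range U Uinv HU); lra | apply (Uinv_lt1 U Uinv HU); lra].
  - rewrite post_unfired by exact E. unfold Hmap.
    assert (Hth := unfired_threshold U N eps phi i Hi E).
    assert (0 <= U (phi i)) by (apply (U_nonneg U Uinv HU), Hr, Hi).
    assert (0 <= INR (size phi) * eps) by apply (pulse_ge0 eps Heps0).
    split; [apply (Uinv_range U Uinv HU); lra | apply (Uinv_lt1 U Uinv HU); lra].
Qed.

Lemma gap_range : forall phi, in_range N phi -> (0 < N)%nat ->
  0 < gap N (post U Uinv Rr N eps phi) /\
  in_range N (evolve U Uinv Rr N eps phi (gap N (post U Uinv Rr N eps phi))).
Proof.
  intros phi Hr HN. assert (Hp := post_range phi Hr).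
  destruct (maxphase_attained N (post U Uinv Rr N eps phi) HN) as [j [Hj Hmax]].
  assert (Hpj := Hp j Hj).
  unfold gap. split; [lra|]. intros i Hi. unfold evolve.
  assert (Hpi := Hp i Hi). assert (Hle := maxphase_ge N (post U Uinv Rr N eps phi) i Hi). lra.
Qed.

Lemma group_after_silent_avalanche : forall T psi p s,
  group_at T psi p -> (forall t, (t < N)%nat -> T t = true -> fired psi t = false) ->
  s = gap N (post U Uinv Rr N eps psi) ->
  group_at T (evolve U Uinv Rr N eps psi s) (H (INR (size psi) * eps) p + s).
Proof.
  intros T psi p s [Hr [HT Hne]] Hnf ->.
  split; [apply gap_range; [exact Hr | destruct Hne as [t [Ht _]]; lia]|].
  split; [|exact Hne]. intros t Ht HTt.
  unfold evolve. rewrite post_unfired, HT by auto. reflexivity.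
Qed.

Lemma group_follows_return_map : forall T L psi p,
  group_at T psi p -> runs U Uinv Rr N eps T psi L ->
  forall t, (t < N)%nat -> T t = true -> final U Uinv Rr N eps psi L t = Mrest U Uinv eps L p.
Proof.
  intros T L. induction L as [|[a s] L IH]; intros psi p Hg Hrun t Ht HTt.
  - apply Hg; assumption.
  - destruct Hrun as [Hnf [Hsize [Hs Hrun]]]. simpl.
    rewrite <- Hsize. exact (IH _ _ (group_after_silent_avalanche T psi p s Hg Hnf Hs) Hrun t Ht HTt).
Qed.

Lemma fired_ahead_of_silent_unit : forall psi p t, (t < N)%nat -> psi t = p ->
  fired psi t = false -> forall i, (i < N)%nat -> fired psi i = true -> ahead psi p i = true.
Proof.
  intros psi p t Ht Hpt Hnf i Hi Hf. unfold ahead. destruct (Rlt_dec p (psi i)) as [|Hle]; [reflexivity|].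
  exfalso.
  assert (Hth_i := fired_threshold U N eps HU1 Heps psi i Hi Hf).
  assert (Hth_t := unfired_threshold U N eps psi t Ht Hnf). rewrite Hpt in Hth_t.
  assert (U (psi i) <= U p) by (apply (U_le U Uinv HU); lra).
  assert (INR (size psi - 1) * eps + eps <= INR (size psi) * eps).
  { assert (Hpos := card_pos N _ i Hi Hf).
    replace (INR (size psi)) with (INR (size psi - 1) + 1) by (rewrite <- S_INR; f_equal; lia).
    lra. }
  lra.
Qed.

Lemma ahead_after_silent_avalanche : forall psi p s t, in_range N psi ->
  (t < N)%nat -> psi t = p -> fired psi t = false -> forall i, (i < N)%nat ->
  ahead (evolve U Uinv Rr N eps psi s) (H (INR (size psi) * eps) p + s) i =
  ahead psi p i && negb (fired psi i).
Proof.
  intros psi p s t Hr Ht Hpt Hnf i Hi. unfold ahead, evolve.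
  assert (Hth_t := unfired_threshold U N eps psi t Ht Hnf). rewrite Hpt in Hth_t.
  assert (Hp0 : 0 <= p) by (rewrite <- Hpt; apply Hr, Ht).
  assert (HUp : 0 <= U p) by (apply (U_nonneg U Uinv HU), Hp0).
  assert (Hk0 := pulse_ge0 eps Heps0 (size psi)).
  destruct (fired psi i) eqn:E.
  - rewrite andb_false_r, post_fired by exact E.
    destruct (Rlt_dec _ _) as [Hlt|]; [exfalso|reflexivity].
    unfold Jmap, Hmap in Hlt.
    assert (Hth_i := fired_threshold U N eps HU1 Heps psi i Hi E).
    assert (HUi : U (psi i) <= 1) by (rewrite <- HU1; apply (U_le U Uinv HU), Hr, Hi).
    assert (HRz := reset_bounds (U (psi i) + INR (size psi - 1) * eps - 1) ltac:(lra)).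
    assert (INR (size psi - 1) * eps <= INR (size psi) * eps)
      by (apply Rmult_le_compat_r; [exact Heps0 | apply le_INR; lia]).
    assert (Uinv (Rr (U (psi i) + INR (size psi - 1) * eps - 1)) <= Uinv (U p + INR (size psi) * eps))
      by (apply (Uinv_le U Uinv HU); lra).
    lra.
  - rewrite andb_true_r, post_unfired by exact E.
    assert (Hth_i := unfired_threshold U N eps psi i Hi E).
    assert (Hi0 : 0 <= psi i) by apply Hr, Hi.
    destruct (Rlt_dec _ _) as [Hlt|Hge]; destruct (Rlt_dec p (psi i)) as [Hlt'|Hge'];
      try reflexivity; exfalso.
    + apply Hge'. apply (Hmap_lt_inv U Uinv HU (INR (size psi) * eps)); lra.
    + apply Hge. apply Rplus_lt_compat_r, (Hmap_lt U Uinv HU); lra.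
Qed.

Lemma card_ahead_after_silent_avalanche : forall psi p s t, in_range N psi ->
  (t < N)%nat -> psi t = p -> fired psi t = false ->
  card N (ahead psi p) =
  (size psi + card N (ahead (evolve U Uinv Rr N eps psi s) (H (INR (size psi) * eps) p + s)))%nat.
Proof.
  intros psi p s t Hr Ht Hpt Hnf.
  rewrite <- (card_split N (ahead psi p) (fired psi) (fired_ahead_of_silent_unit psi p t Ht Hpt Hnf)).
  rewrite (card_ext N _ _ (ahead_after_silent_avalanche psi p s t Hr Ht Hpt Hnf)). lia.
Qed.

Lemma trigger_path_of_return : forall T L psi p,
  group_at T psi p -> runs U Uinv Rr N eps T psi L -> Mrest U Uinv eps L p = 1 ->
  trigger_path U Uinv eps p L /\ firings L = card N (ahead psi p).
Proof.
  intros T L. induction L as [|[a s] L IH]; intros psi p Hg Hrun Hret.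
  - simpl in Hret. subst p. split; [constructor|].
    destruct Hg as [Hr _]. rewrite (card_ext N _ (fun _ => false)).
    + unfold card. rewrite filter_false. reflexivity.
    + intros i Hi. unfold ahead. destruct (Rlt_dec 1 (psi i)); [|reflexivity].
      specialize (Hr i Hi). lra.
  - destruct Hrun as [Hnf [Hsize [Hs Hrun]]].
    assert (Hg' := group_after_silent_avalanche T psi p s Hg Hnf Hs). rewrite Hsize in Hg'.
    destruct (IH _ _ Hg' Hrun Hret) as [Hpath Hfir].
    destruct Hg as [Hr [HT [t [Ht HTt]]]].
    assert (Hnft := Hnf t Ht HTt). assert (Hpt := HT t Ht HTt).
    split.
    + assert (Hth := unfired_threshold U N eps psi t Ht Hnft). rewrite Hsize, Hpt in Hth.
      constructor; [| rewrite <- Hpt; apply Hr, Ht | exact Hth | exact Hpath].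
      rewrite Hs. apply Rlt_le, (gap_range psi Hr). lia.
    + simpl. rewrite Hfir, (card_ahead_after_silent_avalanche psi p s t Hr Ht Hpt Hnft), Hsize.
      reflexivity.
Qed.

Lemma first_avalanche_group : forall phi s t0, in_range N phi -> (t0 < N)%nat -> phi t0 = 1 ->
  s = gap N (post U Uinv Rr N eps phi) ->
  group_at (at_one phi) (evolve U Uinv Rr N eps phi s) (Uinv (Rr (INR (size phi - 1) * eps)) + s).
Proof.
  intros phi s t0 Hr Ht0 Hphi0 ->. split; [apply gap_range; [exact Hr | lia]|]. split.
  - intros i Hi Hone. apply at_one_eq in Hone. unfold evolve.
    rewrite post_fired by (apply fireset_at_one, Hone). rewrite Hone, J_at_one. reflexivity.
  - exists t0. split; [exact Ht0 | apply at_one_eq, Hphi0].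
Qed.

Lemma first_avalanche_ahead : forall phi s t0, in_range N phi -> (t0 < N)%nat -> phi t0 = 1 ->
  card N (ahead (evolve U Uinv Rr N eps phi s) (Uinv (Rr (INR (size phi - 1) * eps)) + s)) =
  (N - size phi)%nat.
Proof.
  intros phi s t0 Hr Ht0 Hphi0.
  assert (Hk1 := card_pos N _ t0 Ht0 (fireset_at_one U N eps phi t0 Hphi0)).
  assert (Hk := avalanche_pulse_bound (fired phi)).
  assert (HRc := reset_bounds (INR (size phi - 1) * eps) (pulse_ge0 eps Heps0 _)).
  assert (Hsplit := card_split N (fun _ => true) (fired phi) (fun _ _ _ => eq_refl)).
  rewrite card_true in Hsplit.
  enough (card N (ahead (evolve U Uinv Rr N eps phi s) (Uinv (Rr (INR (size phi - 1) * eps)) + s)) =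
          card N (fun i => true && negb (fired phi i))) by lia.
  apply card_ext. intros i Hi. unfold ahead, evolve. simpl.
  destruct (fired phi i) eqn:E; simpl.
  - destruct (Rlt_dec _ _) as [Hlt|]; [exfalso|reflexivity].
    rewrite post_fired in Hlt by exact E. unfold Jmap in Hlt.
    assert (Hth := fired_threshold U N eps HU1 Heps phi i Hi E).
    assert (HUi : U (phi i) <= 1) by (rewrite <- HU1; apply (U_le U Uinv HU), Hr, Hi).
    assert (HRz := reset_bounds (U (phi i) + INR (size phi - 1) * eps - 1) ltac:(lra)).
    assert (Rr (U (phi i) + INR (size phi - 1) * eps - 1) <= Rr (INR (size phi - 1) * eps))
      by (apply reset_mono; lra).
    assert (Uinv (Rr (U (phi i) + INR (size phi - 1) * eps - 1)) <= Uinv (Rr (INR (size phi - 1) * eps)))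
      by (apply (Uinv_le U Uinv HU); lra).
    lra.
  - destruct (Rlt_dec _ _) as [|Hge]; [reflexivity|exfalso]. apply Hge.
    rewrite post_unfired by exact E. apply Rplus_lt_compat_r. unfold Hmap.
    assert (Hth := unfired_threshold U N eps phi i Hi E).
    assert (0 <= U (phi i)) by (apply (U_nonneg U Uinv HU), Hr, Hi).
    assert (INR (size phi - 1) * eps < INR (size phi) * eps)
      by (apply Rmult_lt_compat_r; [exact Heps | apply lt_INR; lia]).
    apply (Uinv_lt U Uinv HU); lra.
Qed.

Lemma trigger_final : forall phi F i, realizes U Uinv Rr N eps phi F -> (i < N)%nat -> phi i = 1 ->
  final U Uinv Rr N eps phi F i = MF U Uinv Rr eps F 1.
Proof.
  intros phi F i [[Hr _] HF] Hi Hphi. destruct F as [|[a1 s1] rest]; [contradiction|].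
  destruct HF as [Hsize [Hs Hrun]]. simpl. rewrite J_at_one, <- Hsize.
  apply (group_follows_return_map _ _ _ _ (first_avalanche_group phi s1 i Hr Hi Hphi Hs) Hrun);
    [exact Hi | apply at_one_eq, Hphi].
Qed.

Lemma trigger_return_path : forall F a1 s1 rest,
  admissible U Uinv Rr N eps F -> trigger_invariant U Uinv Rr N eps F ->
  F = (a1, s1) :: rest ->
  trigger_path U Uinv eps (Uinv (Rr (INR (a1 - 1) * eps))) ((0%nat, s1) :: rest) /\
  firings rest = (N - a1)%nat.
Proof.
  intros F a1 s1 rest [phi Hreal] Hinv ->.
  assert (Hret := Hinv phi Hreal).
  destruct Hreal as [[Hr [t0 [Ht0 Hphi0]]] [Hsize [Hs Hrun]]].
  assert (Hg := first_avalanche_group phi s1 t0 Hr Ht0 Hphi0 Hs). rewrite Hsize in Hg.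
  specialize (Hret t0 Ht0 Hphi0). simpl in Hret.
  rewrite (group_follows_return_map _ _ _ _ Hg Hrun t0 Ht0 (proj2 (at_one_eq _ _) Hphi0)) in Hret.
  destruct (trigger_path_of_return _ _ _ _ Hg Hrun Hret) as [Hpath Hfir].
  split.
  - set (c := INR (a1 - 1) * eps).
    assert (Hc0 : 0 <= c) by apply (pulse_ge0 eps Heps0).
    assert (Hc1 : c < 1).
    { apply Rle_lt_trans with (2 := HN1). unfold c. rewrite <- Hsize. apply avalanche_pulse_bound. }
    assert (HRc := reset_bounds c Hc0).
    constructor.
    + rewrite Hs. apply Rlt_le, (gap_range phi Hr). lia.
    + apply (Uinv_range U Uinv HU). lra.
    + rewrite Rmult_0_l, Rplus_0_r, (UUinv U Uinv HU); lra.
    + simpl. rewrite Rmult_0_l, (Hmap0 U Uinv HU). exact Hpath.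
  - rewrite Hfir, <- Hsize. apply (first_avalanche_ahead phi s1 t0 Hr Ht0 Hphi0).
Qed.

End Network.

(* Writing
   c = (a1-1) eps and K = (N-a1) eps, a unit of the triggering group is reset
   to p0 = U^-1(R c), a unit that was at x_a = U^-1(1 - a eps) just before the
   avalanche is reset to q0_a = U^-1(R(c - a eps)), and the later avalanches
   deliver the total pulse K. *)
Section Criteria.
Variables U Uinv Rr : R -> R.
Variable N : nat.
Variable eps : R.
Variable a1 : nat.
Hypothesis HU : rise_function U Uinv.
Hypothesis HR : neuronal_reset Rr.
Hypothesis Heps : 0 < eps.
Hypothesis HN1 : INR (N - 1) * eps < 1.
Hypothesis Ha1 : (2 <= a1 <= N)%nat.

Local Notation H := (Hmap U Uinv).

Let Heps0 : 0 <= eps := Rlt_le _ _ Heps.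
Let c : R := INR (a1 - 1) * eps.
Let K : R := INR (N - a1) * eps.
Let p0 : R := Uinv (Rr c).
Let q0 (a : nat) : R := Uinv (Rr (c - INR a * eps)).
Let x (a : nat) : R := Uinv (1 - INR a * eps).
Let r : R := Uinv (1 - K).
Let y (a : nat) : R := Uinv (1 - K - INR a * eps).

Lemma criteria_pulses : forall a, (1 <= a <= a1 - 1)%nat ->
  0 <= K /\ 0 <= INR a * eps <= c /\ K + INR a * eps <= c + K < 1.
Proof.
  intros a Ha. unfold K, c.
  assert (Hle : forall m n, (m <= n)%nat -> INR m * eps <= INR n * eps)
    by (intros m n Hmn; apply Rmult_le_compat_r; [exact Heps0 | apply le_INR, Hmn]).
  assert (INR (a1 - 1) * eps + INR (N - a1) * eps <= INR (N - 1) * eps)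
    by (rewrite <- Rmult_plus_distr_r, <- plus_INR; apply Hle; lia).
  assert (INR a * eps <= INR (a1 - 1) * eps) by (apply Hle; lia).
  repeat split; try apply (pulse_ge0 eps Heps0); lra.
Qed.

Lemma reset_phases : forall a, (1 <= a <= a1 - 1)%nat ->
  0 <= q0 a <= p0 /\ p0 <= r /\ U p0 = Rr c /\ U (q0 a) = Rr (c - INR a * eps) /\ U p0 + K < 1.
Proof.
  intros a Ha. destruct (criteria_pulses a Ha) as [HK [Hae Hc]].
  assert (HRc := reset_bounds Rr HR c ltac:(lra)).
  assert (HRq := reset_bounds Rr HR (c - INR a * eps) ltac:(lra)).
  assert (Rr (c - INR a * eps) <= Rr c) by (apply (reset_mono Rr HR); lra).
  assert (HUp : U p0 = Rr c) by (apply (UUinv U Uinv HU); lra).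
  unfold q0, r. repeat split.
  - apply (Uinv_range U Uinv HU). lra.
  - apply (Uinv_le U Uinv HU); lra.
  - apply (Uinv_le U Uinv HU); lra.
  - exact HUp.
  - apply (UUinv U Uinv HU). lra.
  - lra.
Qed.

Lemma MF_at_probe : forall a s1 rest, (1 <= a <= a1 - 1)%nat ->
  MF U Uinv Rr eps ((a1, s1) :: rest) (x a) = Mrest U Uinv eps ((0%nat, s1) :: rest) (q0 a).
Proof.
  intros a s1 rest Ha. destruct (criteria_pulses a Ha) as [HK [Hae Hc]].
  simpl. rewrite Rmult_0_l, (Hmap0 U Uinv HU). do 3 f_equal.
  unfold Jmap, x, q0. rewrite (UUinv U Uinv HU) by lra. fold c. f_equal. f_equal. ring.
Qed.

Lemma H_K_values : forall a, (1 <= a <= a1 - 1)%nat ->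
  U r = 1 - K /\ U (y a) = 1 - K - INR a * eps /\ H K r = 1 /\ H K (y a) = x a.
Proof.
  intros a Ha. destruct (criteria_pulses a Ha) as [HK [Hae Hc]].
  assert (HUr : U r = 1 - K) by (apply (UUinv U Uinv HU); lra).
  assert (HUy : U (y a) = 1 - K - INR a * eps) by (apply (UUinv U Uinv HU); lra).
  repeat split; [exact HUr | exact HUy | |]; unfold Hmap.
  - rewrite HUr. replace (1 - K + K) with 1 by ring. apply (Uinv1 U Uinv HU).
  - rewrite HUy. unfold x. f_equal. ring.
Qed.

(* (A) says the gap p0 - q0_a is at most the gap r - y_a between the phases
   that the pulse K takes to 1 and to x_a; (B) says the gap after the pulse K
   is at most 1 - x_a. *)
Lemma condA_iff : forall a, condA U Uinv Rr N eps a1 a <-> p0 - q0 a <= r - y a.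
Proof. intro a. reflexivity. Qed.

Lemma condB_iff : forall a, (1 <= a <= a1 - 1)%nat ->
  condB U Uinv Rr N eps a1 a <-> H K p0 - H K (q0 a) <= 1 - x a.
Proof.
  intros a Ha. destruct (reset_phases a Ha) as [_ [_ [HUp [HUq _]]]].
  unfold condB, Hmap. rewrite HUp, HUq. reflexivity.
Qed.

Lemma sufficiency_icpd : icpd U Uinv ->
  (forall a, (1 <= a <= a1 - 1)%nat -> condA U Uinv Rr N eps a1 a) ->
  invariant_under_return U Uinv Rr N eps a1.
Proof.
  intros Hicpd HA F Hadm Hinv [s1 [rest ->]] a Ha.
  destruct (trigger_return_path U Uinv Rr N eps HU HR Heps HN1 _ a1 s1 rest Hadm Hinv eq_refl)
    as [Hpath Hfir]. fold c p0 in Hpath.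
  destruct (reset_phases a Ha) as [Hq [Hpr _]].
  destruct (H_K_values a Ha) as [HUr [HUy [_ HHy]]].
  destruct (criteria_pulses a Ha) as [HK [Hae Hc]].
  assert (HAa := proj1 (condA_iff a) (HA a Ha)).
  change (x a <= MF U Uinv Rr eps ((a1, s1) :: rest) (x a)). rewrite MF_at_probe by exact Ha.
  assert (Hret := return_bound_icpd U Uinv HU eps Heps0 Hicpd _ _ Hpath (q0 a) Hq).
  simpl firings in Hret. rewrite Hfir in Hret. fold K r in Hret.
  eapply Rle_trans; [|exact Hret]. rewrite <- HHy.
  assert (Hy0 : 0 <= y a) by (apply (Uinv_range U Uinv HU); lra).
  assert (HUle : U (r - (p0 - q0 a)) <= U r) by (apply (U_le U Uinv HU); lra).
  apply (Hmap_le U Uinv HU); lra.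
Qed.

Lemma sufficiency_dcpd : dcpd U Uinv ->
  (forall a, (1 <= a <= a1 - 1)%nat -> condB U Uinv Rr N eps a1 a) ->
  invariant_under_return U Uinv Rr N eps a1.
Proof.
  intros Hdcpd HB F Hadm Hinv [s1 [rest ->]] a Ha.
  destruct (trigger_return_path U Uinv Rr N eps HU HR Heps HN1 _ a1 s1 rest Hadm Hinv eq_refl)
    as [Hpath Hfir]. fold c p0 in Hpath.
  destruct (reset_phases a Ha) as [Hq _].
  assert (HBa := proj1 (condB_iff a Ha) (HB a Ha)).
  change (x a <= MF U Uinv Rr eps ((a1, s1) :: rest) (x a)). rewrite MF_at_probe by exact Ha.
  assert (Hret := return_bound_dcpd U Uinv HU eps Heps0 Hdcpd _ _ Hpath (q0 a) Hq).
  simpl firings in Hret. rewrite Hfir in Hret. fold K in Hret.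
  lra.
Qed.

(* Necessity is tested on explicit firing sequences. *)
Definition return_probe (a : nat) : Prop :=
  exists del, 0 <= del /\ U (p0 + del) + K <= 1 /\ H K (p0 + del) - H K (q0 a + del) <= 1 - x a.

(* With icpd the gap under the pulse K is smallest for the earliest pair, so
   a probe yields condition (B). *)
Lemma condB_of_probe : icpd U Uinv -> forall a, (1 <= a <= a1 - 1)%nat ->
  return_probe a -> condB U Uinv Rr N eps a1 a.
Proof.
  intros Hicpd a Ha [del [Hdel [HUpd Hprobe]]]. apply (condB_iff a Ha).
  destruct (reset_phases a Ha) as [Hq _]. destruct (criteria_pulses a Ha) as [HK [Hae Hc]].
  assert (Hpdr : p0 + del <= Uinv (1 - K))
    by (apply (U_le_inv U Uinv HU); rewrite (UUinv U Uinv HU); lra).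
  assert (Hr1 : Uinv (1 - K) <= 1) by (apply (Uinv_range U Uinv HU); lra).
  assert (Hmono := icpd_DeltaH_mono U Uinv Hicpd K (p0 - q0 a) (q0 a) (q0 a + del)).
  unfold DeltaH in Hmono. replace (q0 a + (p0 - q0 a)) with p0 in Hmono by ring.
  replace (q0 a + del + (p0 - q0 a)) with (p0 + del) in Hmono by ring.
  enough (H K p0 - H K (q0 a) <= H K (p0 + del) - H K (q0 a + del)) by lra.
  apply Hmono; lra.
Qed.

(* With dcpd the gap under K is largest for the earliest pair; comparing the
   probe with the latest admissible pair (r - (p0 - q0_a), r) yields (A). *)
Lemma condA_of_probe : dcpd U Uinv -> forall a, (1 <= a <= a1 - 1)%nat ->
  return_probe a -> condA U Uinv Rr N eps a1 a.
Proof.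
  intros Hdcpd a Ha [del [Hdel [HUpd Hprobe]]]. apply condA_iff.
  destruct (reset_phases a Ha) as [Hq _]. destruct (criteria_pulses a Ha) as [HK [Hae Hc]].
  destruct (H_K_values a Ha) as [HUr [HUy [HHr HHy]]].
  assert (Hpdr : p0 + del <= r) by (apply (U_le_inv U Uinv HU); lra).
  assert (Hr1 : r <= 1) by (apply (Uinv_range U Uinv HU); lra).
  assert (Hmono := dcpd_DeltaH_mono U Uinv Hdcpd K (p0 - q0 a) (q0 a + del) (r - (p0 - q0 a))).
  unfold DeltaH in Hmono. replace (q0 a + del + (p0 - q0 a)) with (p0 + del) in Hmono by ring.
  replace (r - (p0 - q0 a) + (p0 - q0 a)) with r in Hmono by ring. rewrite HHr in Hmono.
  assert (Hlate : x a <= H K (r - (p0 - q0 a))).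
  { enough (1 - H K (r - (p0 - q0 a)) <= 1 - x a) by lra.
    eapply Rle_trans; [apply Hmono; fold r; lra | exact Hprobe]. }
  destruct (Rle_lt_dec (y a) (r - (p0 - q0 a))) as [|Hlt]; [lra | exfalso].
  assert (Hy0 : 0 <= y a) by (apply (Uinv_range U Uinv HU); lra).
  assert (H K (r - (p0 - q0 a)) < H K (y a)) by (apply (Hmap_lt U Uinv HU); lra).
  lra.
Qed.

(* When all N units form the first avalanche, they return together: the
   sequence [(N, 1 - p0)] is admissible and trigger invariant, and gives the
   probe with del = 0. *)
Lemma probe_all_fire : a1 = N -> invariant_under_return U Uinv Rr N eps a1 ->
  forall a, (1 <= a <= a1 - 1)%nat -> return_probe a.
Proof.
  intros HaN Hinv a Ha.
  destruct (reset_phases a Ha) as [_ [_ [_ [_ HUpK]]]].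
  assert (HK0 : K = 0) by (unfold K; rewrite HaN, Nat.sub_diag; simpl; ring).
  set (phi0 := fun _ : nat => 1).
  set (F := [(a1, 1 - p0)]).
  assert (Hfired : forall i, (i < N)%nat -> fireset U N eps phi0 i = true)
    by (intros i _; apply fireset_at_one; reflexivity).
  assert (Hsize : card N (fireset U N eps phi0) = a1).
  { rewrite HaN, (card_ext N _ (fun _ => true) Hfired). apply card_true. }
  assert (Hpost : forall i, (i < N)%nat -> post U Uinv Rr N eps phi0 i = p0).
  { intros i Hi. rewrite (post_fired U Uinv Rr N eps phi0 i (Hfired i Hi)), Hsize.
    apply (J_at_one U Uinv Rr HU). }
  assert (Hgap : 1 - p0 = gap N (post U Uinv Rr N eps phi0)).
  { unfold gap. rewrite (maxphase_eq N _ p0 0%nat ltac:(lia) (Hpost 0%nat ltac:(lia))); [reflexivity|].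
    intros i Hi. rewrite Hpost by exact Hi. lra. }
  assert (Hreal : realizes U Uinv Rr N eps phi0 F).
  { split; [split; [intros i _; unfold phi0; lra | exists 0%nat; split; [lia | reflexivity]]|].
    split; [exact Hsize|]. split; [exact Hgap|].
    exists 0%nat. split; [lia|]. split; [apply at_one_eq; reflexivity|].
    apply fireset_at_one. unfold evolve. rewrite Hpost by lia. ring. }
  assert (Htrig : trigger_invariant U Uinv Rr N eps F).
  { intros phi Hphi i Hi Hi1. rewrite (trigger_final U Uinv Rr N eps HU HR Heps HN1 phi F i Hphi Hi Hi1).
    simpl. rewrite (J_at_one U Uinv Rr HU). fold c p0. ring. }
  assert (HM := Hinv F (ex_intro _ phi0 Hreal) Htrig (ex_intro _ _ (ex_intro _ [] eq_refl)) a Ha).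
  change (x a <= MF U Uinv Rr eps ((a1, 1 - p0) :: []) (x a)) in HM.
  rewrite MF_at_probe in HM by exact Ha. simpl in HM.
  rewrite Rmult_0_l, (Hmap0 U Uinv HU) in HM.
  exists 0. rewrite HK0, !Rplus_0_r, !(Hmap0 U Uinv HU). repeat split; lra.
Qed.

(* When a1 < N, the probe sequence has two groups: the a1 triggering units at
   phase 1, and N - a1 units placed so that the first avalanche brings them
   to phase 1 - del.  They fire together del later, kicking the triggering
   group from p0 + del to P = H_K(p0 + del), which then returns freely. *)
Section TwoGroups.
Hypothesis HaN : (a1 < N)%nat.
Variable del : R.
Hypothesis Hdel0 : 0 < del.
Hypothesis Hdel_first : Uinv (INR a1 * eps) <= 1 - del.
Hypothesis Hdel_second : U (p0 + del) + K < 1.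

Let phio : R := Uinv (U (1 - del) - INR a1 * eps).
Let phi0 (i : nat) : R := if Nat.ltb i a1 then 1 else phio.
Let psi1 : nat -> R := evolve U Uinv Rr N eps phi0 del.
Let P : R := H K (p0 + del).
Let F : list (nat * R) := [(a1, del); ((N - a1)%nat, 1 - P)].

Lemma two_groups_phases :
  INR a1 * eps <= U (1 - del) < 1 /\ U phio = U (1 - del) - INR a1 * eps /\
  0 <= phio <= 1 /\ phio <> 1 /\ 0 <= p0 /\ p0 + del < 1.
Proof.
  assert (Ha1e : INR a1 * eps <= INR (N - 1) * eps)
    by (apply Rmult_le_compat_r; [exact Heps0 | apply le_INR; lia]).
  assert (Ha1e0 := pulse_ge0 eps Heps0 a1).
  assert (Hs : INR a1 * eps <= U (1 - del) < 1).
  { split; [rewrite <- (UUinv U Uinv HU (INR a1 * eps)) by lra; apply (U_le U Uinv HU), Hdel_first|].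
    rewrite <- (U1 U Uinv HU) at 2. apply (U_lt U Uinv HU). lra. }
  assert (HUo : U phio = U (1 - del) - INR a1 * eps) by (apply (UUinv U Uinv HU); lra).
  destruct (reset_phases 1 ltac:(lia)) as [[Hq0 Hqp] _].
  destruct (criteria_pulses 1 ltac:(lia)) as [HK _].
  repeat split; try lra.
  - apply (Uinv_range U Uinv HU). lra.
  - apply (Uinv_range U Uinv HU). lra.
  - intro Ho. rewrite Ho, (U1 U Uinv HU) in HUo. lra.
  - apply (U_lt_inv U Uinv HU). rewrite (U1 U Uinv HU). lra.
Qed.

Lemma two_groups_first_fired : forall i, (i < N)%nat -> fireset U N eps phi0 i = Nat.ltb i a1.
Proof.
  destruct two_groups_phases as [Hs [HUo [_ [Ho1 _]]]].
  apply fireset_char.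
  - intros i Hi. destruct (Nat.ltb i a1) eqn:E.
    + apply at_one_eq. unfold phi0. rewrite E. reflexivity.
    + destruct (at_one phi0 i) eqn:Eo; [exfalso|reflexivity].
      apply at_one_eq in Eo. unfold phi0 in Eo. rewrite E in Eo. exact (Ho1 Eo).
  - intros i Hi. unfold fire_step. destruct (Nat.ltb i a1) eqn:E; [reflexivity|].
    simpl. rewrite card_first by lia. unfold phi0. rewrite E.
    destruct (Rle_dec 1 _); [lra | reflexivity].
Qed.

Lemma two_groups_first_post : forall i, (i < N)%nat ->
  post U Uinv Rr N eps phi0 i = if Nat.ltb i a1 then p0 else 1 - del.
Proof.
  destruct two_groups_phases as [Hs [HUo _]].
  assert (Hsize : card N (fireset U N eps phi0) = a1)
    by (rewrite (card_ext N _ _ two_groups_first_fired); apply card_first; lia).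
  intros i Hi. destruct (Nat.ltb i a1) eqn:E.
  - rewrite post_fired by (rewrite two_groups_first_fired, E by exact Hi; reflexivity).
    rewrite Hsize. unfold phi0. rewrite E. apply (J_at_one U Uinv Rr HU).
  - rewrite post_unfired by (rewrite two_groups_first_fired, E by exact Hi; reflexivity).
    rewrite Hsize. unfold phi0, Hmap. rewrite E, HUo.
    replace (U (1 - del) - INR a1 * eps + INR a1 * eps) with (U (1 - del)) by ring.
    apply (UinvU U Uinv HU).
Qed.

Lemma two_groups_first_gap : del = gap N (post U Uinv Rr N eps phi0).
Proof.
  destruct two_groups_phases as [_ [_ [_ [_ [_ Hpd]]]]].
  unfold gap. rewrite (maxphase_eq N _ (1 - del) a1 HaN); [ring| |].
  - rewrite two_groups_first_post, Nat.ltb_irrefl by exact HaN. reflexivity.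
  - intros i Hi. rewrite two_groups_first_post by exact Hi. destruct (Nat.ltb i a1); lra.
Qed.

Lemma two_groups_psi1 : forall i, (i < N)%nat -> psi1 i = if Nat.ltb i a1 then p0 + del else 1.
Proof.
  intros i Hi. unfold psi1, evolve. rewrite two_groups_first_post by exact Hi.
  destruct (Nat.ltb i a1); ring.
Qed.

Lemma two_groups_second_fired : forall i, (i < N)%nat ->
  fireset U N eps psi1 i = negb (Nat.ltb i a1).
Proof.
  destruct two_groups_phases as [_ [_ [_ [_ [_ Hpd]]]]].
  apply fireset_char.
  - intros i Hi. destruct (Nat.ltb i a1) eqn:E; simpl.
    + destruct (at_one psi1 i) eqn:Eo; [exfalso|reflexivity].
      apply at_one_eq in Eo. rewrite two_groups_psi1, E in Eo by exact Hi. lra.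
    + apply at_one_eq. rewrite two_groups_psi1, E by exact Hi. reflexivity.
  - intros i Hi. unfold fire_step. destruct (Nat.ltb i a1) eqn:E; [|reflexivity].
    simpl. rewrite card_last by lia. rewrite two_groups_psi1, E by exact Hi. fold K.
    destruct (Rle_dec 1 _); [lra | reflexivity].
Qed.

(* After the second avalanche the triggering group is at P, the leading
   phase (the second group has just been reset behind it). *)
Lemma two_groups_second_post : forall i, (i < N)%nat ->
  post U Uinv Rr N eps psi1 i <= P /\ (Nat.ltb i a1 = true -> post U Uinv Rr N eps psi1 i = P).
Proof.
  destruct two_groups_phases as [_ [_ [_ [_ [Hp0 Hpd]]]]].
  assert (Hsize : card N (fireset U N eps psi1) = (N - a1)%nat)
    by (rewrite (card_ext N _ _ two_groups_second_fired); apply card_last; lia).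
  assert (HUpd : 0 <= U (p0 + del)) by (apply (U_nonneg U Uinv HU); lra).
  intros i Hi. destruct (Nat.ltb i a1) eqn:E.
  - rewrite post_unfired by (rewrite two_groups_second_fired, E by exact Hi; reflexivity).
    rewrite Hsize, two_groups_psi1, E by exact Hi. fold K P. split; [lra | reflexivity].
  - split; [|discriminate].
    rewrite post_fired by (rewrite two_groups_second_fired, E by exact Hi; reflexivity).
    rewrite Hsize, two_groups_psi1, E, (J_at_one U Uinv Rr HU) by exact Hi.
    assert (Hz : 0 <= INR (N - a1 - 1) * eps <= K)
      by (split; [apply (pulse_ge0 eps Heps0) | apply Rmult_le_compat_r; [exact Heps0 | apply le_INR; lia]]).
    assert (HRz := reset_bounds Rr HR _ (proj1 Hz)).
    apply (Uinv_le U Uinv HU); lra.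
Qed.

Lemma two_groups_realizes : realizes U Uinv Rr N eps phi0 F.
Proof.
  destruct two_groups_phases as [_ [_ [Ho [Ho1 _]]]].
  assert (H0a1 : Nat.ltb 0 a1 = true) by (apply Nat.ltb_lt; lia).
  split; [split|].
  - intros i _. unfold phi0. destruct (Nat.ltb i a1); lra.
  - exists 0%nat. split; [lia|]. unfold phi0. rewrite H0a1. reflexivity.
  - split; [rewrite (card_ext N _ _ two_groups_first_fired); apply card_first; lia|].
    split; [exact two_groups_first_gap|]. fold psi1.
    split; [intros i Hi HT; apply at_one_eq in HT; unfold phi0 in HT|].
    { rewrite two_groups_second_fired by exact Hi.
      destruct (Nat.ltb i a1); [reflexivity | exfalso; exact (Ho1 HT)]. }
    split; [rewrite (card_ext N _ _ two_groups_second_fired); apply card_last; lia|].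
    split.
    + unfold gap. rewrite (maxphase_eq N _ P 0%nat ltac:(lia)); [reflexivity | |].
      * apply two_groups_second_post; [lia | exact H0a1].
      * intros i Hi. apply two_groups_second_post, Hi.
    + exists 0%nat. split; [lia|]. split.
      * apply at_one_eq. unfold phi0. rewrite H0a1. reflexivity.
      * apply fireset_at_one. unfold evolve.
        rewrite (proj2 (two_groups_second_post 0%nat ltac:(lia)) H0a1). ring.
Qed.

Lemma two_groups_trigger_invariant : trigger_invariant U Uinv Rr N eps F.
Proof.
  intros phi Hphi i Hi Hi1. rewrite (trigger_final U Uinv Rr N eps HU HR Heps HN1 phi F i Hphi Hi Hi1).
  simpl. rewrite (J_at_one U Uinv Rr HU). fold c p0 K P. ring.
Qed.

Lemma two_groups_probe : invariant_under_return U Uinv Rr N eps a1 ->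
  forall a, (1 <= a <= a1 - 1)%nat -> H K (p0 + del) - H K (q0 a + del) <= 1 - x a.
Proof.
  intros Hinv a Ha.
  assert (HM := Hinv F (ex_intro _ phi0 two_groups_realizes) two_groups_trigger_invariant
                  (ex_intro _ _ (ex_intro _ _ eq_refl)) a Ha).
  change (x a <= MF U Uinv Rr eps F (x a)) in HM. unfold F in HM.
  rewrite MF_at_probe in HM by exact Ha. simpl in HM.
  rewrite Rmult_0_l, (Hmap0 U Uinv HU) in HM. unfold P in HM. fold K in HM. lra.
Qed.

End TwoGroups.

Lemma probe_delay_exists : (a1 < N)%nat ->
  exists del, 0 < del /\ Uinv (INR a1 * eps) <= 1 - del /\ U (p0 + del) + K < 1.
Proof.
  intro HaN. destruct (reset_phases 1 ltac:(lia)) as [[Hq0 Hqp] [_ [_ [_ HUpK]]]].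
  destruct (criteria_pulses 1 ltac:(lia)) as [HK _].
  assert (Ha1e : INR a1 * eps < 1).
  { apply Rle_lt_trans with (2 := HN1). apply Rmult_le_compat_r; [exact Heps0 | apply le_INR; lia]. }
  assert (Ha1e0 := pulse_ge0 eps Heps0 a1).
  set (m := (U p0 + 1 - K) / 2).
  assert (HUp0 : 0 <= U p0) by (apply (U_nonneg U Uinv HU); lra).
  assert (Hm : p0 < Uinv m) by (apply (U_lt_inv U Uinv HU); rewrite (UUinv U Uinv HU); unfold m; lra).
  assert (Hfirst : Uinv (INR a1 * eps) < 1) by (apply (Uinv_lt1 U Uinv HU); lra).
  exists (Rmin (Uinv m - p0) (1 - Uinv (INR a1 * eps))).
  assert (Hmin1 := Rmin_l (Uinv m - p0) (1 - Uinv (INR a1 * eps))).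
  assert (Hmin2 := Rmin_r (Uinv m - p0) (1 - Uinv (INR a1 * eps))).
  repeat split; [apply Rmin_glb_lt; lra | lra |].
  assert (Hle : U (p0 + Rmin (Uinv m - p0) (1 - Uinv (INR a1 * eps))) <= U (Uinv m))
    by (apply (U_le U Uinv HU); lra).
  rewrite (UUinv U Uinv HU) in Hle by (unfold m; lra).
  assert (m < 1 - K) by (unfold m; lra). lra.
Qed.

Lemma probe_two_groups : (a1 < N)%nat -> invariant_under_return U Uinv Rr N eps a1 ->
  forall a, (1 <= a <= a1 - 1)%nat -> return_probe a.
Proof.
  intros HaN Hinv a Ha.
  destruct (probe_delay_exists HaN) as [del [Hdel0 [Hdel1 Hdel2]]].
  exists del. split; [lra|]. split; [lra|].
  exact (two_groups_probe HaN del Hdel0 Hdel1 Hdel2 Hinv a Ha).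
Qed.

Lemma probe_of_invariance : invariant_under_return U Uinv Rr N eps a1 ->
  forall a, (1 <= a <= a1 - 1)%nat -> return_probe a.
Proof.
  intro Hinv. destruct (Nat.eq_dec a1 N) as [HaN|HaN].
  - exact (probe_all_fire HaN Hinv).
  - apply probe_two_groups; [lia | exact Hinv].
Qed.

End Criteria.

Theorem mainTheorem6 (U Uinv Rr : R -> R) (N : nat) (eps : R) (a1 : nat) :
  rise_function U Uinv ->
  neuronal_reset Rr ->
  0 < eps -> INR (N - 1) * eps < 1 ->
  (2 <= a1 <= N)%nat ->
  (icpd U Uinv ->
     ((forall a, (1 <= a <= a1 - 1)%nat -> condA U Uinv Rr N eps a1 a) ->
        invariant_under_return U Uinv Rr N eps a1) /\
     (invariant_under_return U Uinv Rr N eps a1 ->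
        forall a, (1 <= a <= a1 - 1)%nat -> condB U Uinv Rr N eps a1 a)) /\
  (dcpd U Uinv ->
     ((forall a, (1 <= a <= a1 - 1)%nat -> condB U Uinv Rr N eps a1 a) ->
        invariant_under_return U Uinv Rr N eps a1) /\
     (invariant_under_return U Uinv Rr N eps a1 ->
        forall a, (1 <= a <= a1 - 1)%nat -> condA U Uinv Rr N eps a1 a)).
Proof.
  intros HU HR Heps HN1 Ha1.
  assert (Hprobe := probe_of_invariance U Uinv Rr N eps a1 HU HR Heps HN1 Ha1).
  split; intro Hshape; split.
  - exact (sufficiency_icpd U Uinv Rr N eps a1 HU HR Heps HN1 Ha1 Hshape).
  - intros Hinv a Ha.
    exact (condB_of_probe U Uinv Rr N eps a1 HU HR Heps HN1 Ha1 Hshape a Ha (Hprobe Hinv a Ha)).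
  - exact (sufficiency_dcpd U Uinv Rr N eps a1 HU HR Heps HN1 Ha1 Hshape).
  - intros Hinv a Ha.
    exact (condA_of_probe U Uinv Rr N eps a1 HU HR Heps HN1 Ha1 Hshape a Ha (Hprobe Hinv a Ha)).
Qed.
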